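(* Let $(V,\mathcal H,\iota,W)$ be a generalized functional theory. The functionals $\mathcal F_{HK}$, $\mathcal F_p$, $\mathcal F_e$ agree on their common domain, and this common domain is the set $\bigcup_{v\in V}\iota^*(\mathbf G_p(v))$ of pure-state $v$-representable densities.
   Context: A generalized functional theory is a tuple $(V,\mathcal H,\iota,W)$ with $V$ a finite-dimensional real vector space, $\mathcal H$ a finite-dimensional complex Hilbert space, $\iota:V\to i\mathfrak u(\mathcal H)$ linear into the Hermitian operators, $W$ Hermitian. Density operators are regarded as elements of $(i\mathfrak u(\mathcal H))^*$ via the trace pairing; $\iota^*$ is the dual map. $\mathcal P$ = pure states, $\mathcal E$ = density operators, $\mathbf G_p(v)$ = pure ground states of $\iota(v)+W$. $\mathcal F_{HK}$ is defined on $\bigcup_v\iota^*(\mathbf G_p(v))$ by $\mathcal F_{HK}(\rho)=\mathrm{Tr}(\Gamma W)$ for any $v$ and any $\Gamma\in\mathbf G_p(v)$ with $\iota^*(\Gamma)=\rho$ (independent of choices). $\mathcal F_p(\rho)=\min\{\mathrm{Tr}(\Gamma W):\Gamma\in\mathcal P,\iota^*(\Gamma)=\rho\}$ on $\iota^*(\mathcal P)$ and $\mathcal F_e(\rho)=\min\{\mathrm{Tr}(\Gamma W):\Gamma\in\mathcal E,\iota^*(\Gamma)=\rho\}$ on $\iota^*(\mathcal E)$. *)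

From HB Require Import structures.
From mathcomp Require Import all_boot all_order all_algebra.
From mathcomp Require Import complex.
From mathcomp Require Import reals.

Set Implicit Arguments.
Unset Strict Implicit.
Unset Printing Implicit Defensive.

Import Order.TTheory GRing.Theory Num.Theory.
Local Open Scope ring_scope.
Local Open Scope sesquilinear_scope.

(* The Hilbert space H is C^n (column vectors 'cV[R[i]]_n, standard inner
   product); operators on H are n x n complex matrices. *)

Definition herm_op (R : rcfType) (n : nat) (M : 'M[R[i]]_n) : Prop :=
  M \is hermsymmx.

Definition density_op (R : rcfType) (n : nat) (G : 'M[R[i]]_n) : Prop :=
  [/\ herm_op G,
      (forall x : 'cV[R[i]]_n, 0 <= (x ^t* *m G *m x) 0 0)
    & \tr G = 1].

Definition pure_state (R : rcfType) (n : nat) (G : 'M[R[i]]_n) : Prop :=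
  exists psi : 'cV[R[i]]_n, psi ^t* *m psi = 1%:M /\ G = psi *m psi ^t*.

(** Trace pairing Tr(G A), which is real for Hermitian G, A. *)
Definition tr_pair (R : rcfType) (n : nat) (G A : 'M[R[i]]_n) : R :=
  complex.Re (\tr (G *m A)).

Definition ground_state (R : rcfType) (n : nat) (Hm G : 'M[R[i]]_n) : Prop :=
  density_op G /\ forall G', density_op G' -> tr_pair G Hm <= tr_pair G' Hm.

Definition pure_ground_state (R : rcfType) (V : Type) (n : nat)
  (iota : V -> 'M[R[i]]_n) (W : 'M[R[i]]_n) (v : V) (G : 'M[R[i]]_n) : Prop :=
  pure_state G /\ ground_state (iota v + W) G.

(** The dual map iota^* : density operators -> V^* (linear functionals on V),
    via the trace pairing. *)
Definition iota_star (R : rcfType) (V : Type) (n : nat)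
  (iota : V -> 'M[R[i]]_n) (G : 'M[R[i]]_n) : V -> R :=
  fun v => tr_pair G (iota v).

Definition pvrep (R : rcfType) (V : Type) (n : nat)
  (iota : V -> 'M[R[i]]_n) (W : 'M[R[i]]_n) (rho : V -> R) : Prop :=
  exists v G, pure_ground_state iota W v G /\ iota_star iota G = rho.

(** Graph of F_HK: F_HK(rho) = y iff y = Tr(G W) for some v and some
    G in G_p(v) with iota^*(G) = rho. *)
Definition F_HK_is (R : rcfType) (V : Type) (n : nat)
  (iota : V -> 'M[R[i]]_n) (W : 'M[R[i]]_n) (rho : V -> R) (y : R) : Prop :=
  exists v G, [/\ pure_ground_state iota W v G, iota_star iota G = rho
                & tr_pair G W = y].

Definition is_min_over (R : rcfType) (T : Type) (S : T -> Prop) (f : T -> R)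
  (y : R) : Prop :=
  (exists x, S x /\ f x = y) /\ (forall x, S x -> y <= f x).

Definition F_p_is (R : rcfType) (V : Type) (n : nat)
  (iota : V -> 'M[R[i]]_n) (W : 'M[R[i]]_n) (rho : V -> R) (y : R) : Prop :=
  is_min_over (fun G => pure_state G /\ iota_star iota G = rho)
              (fun G => tr_pair G W) y.

Definition F_e_is (R : rcfType) (V : Type) (n : nat)
  (iota : V -> 'M[R[i]]_n) (W : 'M[R[i]]_n) (rho : V -> R) (y : R) : Prop :=
  is_min_over (fun G => density_op G /\ iota_star iota G = rho)
              (fun G => tr_pair G W) y.

Definition dom_F_p (R : rcfType) (V : Type) (n : nat)
  (iota : V -> 'M[R[i]]_n) (rho : V -> R) : Prop :=
  exists G, pure_state G /\ iota_star iota G = rho.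

Definition dom_F_e (R : rcfType) (V : Type) (n : nat)
  (iota : V -> 'M[R[i]]_n) (rho : V -> R) : Prop :=
  exists G, density_op G /\ iota_star iota G = rho.

From HB Require Import structures.
From mathcomp Require Import all_boot all_order all_algebra.
From mathcomp Require Import complex.
From mathcomp Require Import reals.

Set Implicit Arguments.
Unset Strict Implicit.
Unset Printing Implicit Defensive.

Import Order.TTheory GRing.Theory Num.Theory.
Local Open Scope ring_scope.
Local Open Scope sesquilinear_scope.

(* If G is a pure ground state of iota(v) + W and G' is any density operator
   with the same density rho, then Tr(G' (iota v + W)) = rho(v) + Tr(G' W)
   is bounded below by Tr(G (iota v + W)) = rho(v) + Tr(G W), so
   Tr(G W) <= Tr(G' W).  Pure states being density operators, Tr(G W) is
   thus the minimum over both classes. *)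

Lemma trmxC_mul (C : numClosedFieldType) m n p
    (A : 'M[C]_(m, n)) (B : 'M[C]_(n, p)) :
  (A *m B) ^t* = B ^t* *m A ^t*.
Proof. by rewrite trmx_mul map_mxM. Qed.

Lemma dyad_hermitian (C : numClosedFieldType) n (psi : 'cV[C]_n) :
  psi *m psi ^t* \is hermsymmx.
Proof.
by apply/is_hermitianmxP; rewrite expr0 scale1r trmxC_mul trmxCK.
Qed.

Lemma dyad_psd (C : numClosedFieldType) n (psi x : 'cV[C]_n) :
  0 <= (x ^t* *m (psi *m psi ^t*) *m x) 0 0.
Proof.
have -> : x ^t* *m (psi *m psi ^t*) *m x = (psi ^t* *m x) ^t* *m (psi ^t* *m x).
  by rewrite trmxC_mul trmxCK !mulmxA.
rewrite mxE big_ord1 !mxE mulrC.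
exact: mul_conjC_ge0.
Qed.

Lemma pure_state_density (R : rcfType) n (G : 'M[R[i]]_n) :
  pure_state G -> density_op G.
Proof.
case=> psi [psi_unit ->]; split.
- exact: dyad_hermitian.
- exact: dyad_psd.
- by rewrite mxtrace_mulC psi_unit mxtrace1.
Qed.

Lemma pure_ground_state_density (R : rcfType) (V : Type) n
    (iota : V -> 'M[R[i]]_n) W v G :
  pure_ground_state iota W v G -> density_op G.
Proof. by case=> _ []. Qed.

Lemma tr_pairD (R : rcfType) n (G A B : 'M[R[i]]_n) :
  tr_pair G (A + B) = tr_pair G A + tr_pair G B.
Proof. by rewrite /tr_pair mulmxDr mxtraceD raddfD. Qed.

Lemma ground_state_tr_pair_min (R : rcfType) n (A W G G' : 'M[R[i]]_n) :
  ground_state (A + W) G -> density_op G' -> tr_pair G A = tr_pair G' A ->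
  tr_pair G W <= tr_pair G' W.
Proof.
case=> _ G_min G'_dens GG'_A.
by have := G_min G' G'_dens; rewrite !tr_pairD GG'_A lerD2l.
Qed.

Lemma pure_ground_state_min (R : rcfType) (V : Type) n
    (iota : V -> 'M[R[i]]_n) W v G G' :
  pure_ground_state iota W v G -> density_op G' ->
  iota_star iota G = iota_star iota G' -> tr_pair G W <= tr_pair G' W.
Proof.
case=> _ G_ground G'_dens same_rho.
apply: ground_state_tr_pair_min G_ground G'_dens _.
by have := congr1 (fun rho => rho v) same_rho.
Qed.

Local Close Scope sesquilinear_scope.

Theorem proposition2p31 (R : realType) (V : vectType R) (n : nat)
  (iota : V -> 'M[R[i]]_n) (W : 'M[R[i]]_n)
  (iota_lin : forall (a : R) (u v : V),
      iota (a *: u + v) = real_complex R a *: iota u + iota v)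
  (iota_herm : forall v : V, herm_op (iota v))
  (W_herm : herm_op W) :
  (* the common domain of F_HK, F_p, F_e is the set of pure-state
     v-representable densities *)
  (forall rho : V -> R,
      (pvrep iota W rho /\ dom_F_p iota rho /\ dom_F_e iota rho)
      <-> pvrep iota W rho) /\
  (* on it, the three functionals agree *)
  (forall (rho : V -> R) (y : R),
      pvrep iota W rho -> F_HK_is iota W rho y ->
      F_p_is iota W rho y /\ F_e_is iota W rho y).
Proof.
split=> [rho | rho y _ [v [G [G_pg G_rho G_y]]]].
  split=> [[] // | rep]; split=> //.
  have [v [G [G_pg G_rho]]] := rep.
  split; exists G; split=> //.
  - by case: G_pg.
  - exact: pure_ground_state_density G_pg.
have [G_pure _] := G_pg.
have G_dens := pure_ground_state_density G_pg.
have G_min G' : density_op G' -> iota_star iota G' = rho -> y <= tr_pair G' W.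
  move=> G'_dens G'_rho; rewrite -G_y.
  by apply: pure_ground_state_min G_pg G'_dens _; rewrite G_rho G'_rho.
split; split.
- by exists G; split; [split |].
- by move=> G' [/pure_state_density]; exact: G_min.
- by exists G; split; [split |].
- by move=> G' []; exact: G_min.
Qed.
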